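(* Let $q=p^a$ with $p$ prime, $\mathcal V=\mathbb F_q$ (so $v=q$), and let $G=N.L\le{\rm A\Gamma L}(1,q)$, where $N$ is the group of all translations of $\mathcal V$ and $L\le{\rm \Gamma L}(1,q)$ is transitive on $\mathcal V\setminus\{0\}$. Let $\gamma\subset\mathcal V$ with $|\gamma|=k$, $1\le k\le v-1$, such that $G_\gamma$ is transitive on $\gamma\times(\mathcal V\setminus\gamma)$, and set $M=G_\gamma\cap N$. Then $k\in\{1,v-1\}$ if and only if $M=1$. *)

From HB Require Import structures.
From mathcomp Require Import all_boot all_order all_algebra all_fingroup.
From mathcomp Require Import all_field.
Set Implicit Arguments. Unset Strict Implicit. Unset Printing Implicit Defensive.
Import GRing.Theory.
Local Open Scope ring_scope.

Section AGammaL.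
Variable F : finFieldType.

Definition transl (b : F) : {perm F} := perm (@addIr F b).

Definition transl_set : {set {perm F}} := [set transl b | b : F].

Definition in_GammaL (g : {perm F}) : Prop :=
  exists (a : F) (sigma : {rmorphism F -> F}),
    a != 0 /\ bijective sigma /\ forall x, g x = a * sigma x.
End AGammaL.

(* If M = G_gamma ∩ N is
   trivial, no translation preserves gamma, so any two affine maps
   x |-> a x + c preserving gamma commute (their commutator is a translation).
   If some such map has slope a <> 1, every element of G_gamma conjugates it to
   another one with slope <> 1, which commutes with it and therefore shares its
   unique fixed point; hence G_gamma fixes a point, and transitivity on
   gamma x (V \ gamma) forces gamma or its complement to be that point.
   Otherwise the only affine map preserving gamma is the identity, so an
   element x |-> b s(x) + e of G_gamma is determined by the automorphism s,
   i.e. by s(w) for a generator w of F^*; thus k (q - k) <= |G_gamma| <= q - 1,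
   which again gives k = 1 or k = q - 1.  Conversely, if gamma or its
   complement is a point, every translation stabilising gamma fixes it. *)

From HB Require Import structures.
From mathcomp Require Import all_boot all_order all_algebra all_fingroup.
From mathcomp Require Import all_field all_solvable.
From mathcomp Require Import ring zify.
Import GRing.Theory.

Lemma leq_mul_pred_add k m :
  (0 < k)%N -> (0 < m)%N -> (k * m <= (k + m).-1)%N -> k = 1%N \/ m = 1%N.
Proof. nia. Qed.

Lemma inj_homo_onto {T : finType} {A : {set T}} {f : T -> T} :
  injective f -> {homo f : x / x \in A} ->
  {in A, forall y, exists2 x, x \in A & f x = y}.
Proof.
move=> f_inj fA y yA.
have fAA : f @: A = A.
  apply/eqP; rewrite eqEcard card_imset // leqnn andbT.
  by apply/subsetP => _ /imsetP[x xA ->]; exact: fA.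
by move: yA; rewrite -{1}fAA => /imsetP[x xA ->]; exists x.
Qed.

Section PairTransitiveStabiliser.

Context {T : finType} {H : {set {perm T}}} {gamma : {set T}}.
Hypothesis H_pair_trans : forall x x' y y', x \in gamma -> x' \in gamma ->
  y \notin gamma -> y' \notin gamma ->
  exists2 g, g \in H & g x = x' /\ g y = y'.
Context {x0 y0 : T}.
Hypotheses (x0_gamma : x0 \in gamma) (y0_gamma : y0 \notin gamma).

Lemma card_pair_trans_ge : (#|gamma| * #|~: gamma| <= #|H|)%N.
Proof.
rewrite -cardsX; apply: leq_trans (leq_imset_card (fun g : {perm T} => (g x0, g y0)) H).
apply: subset_leq_card; apply/subsetP => -[x y]; rewrite !inE /= => /andP[xg yg].
have [g gH [<- <-]] := H_pair_trans _ _ _ _ x0_gamma xg y0_gamma yg.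
by apply/imsetP; exists g.
Qed.

Lemma pair_trans_fixpoint_card1 (z : T) : {in H, forall h : {perm T}, h z = z} ->
  #|gamma| = 1%N \/ #|~: gamma| = 1%N.
Proof.
move=> Hz; have [zg | zg] := boolP (z \in gamma); [left | right];
  apply/eqP/cards1P; exists z; apply/eqP; rewrite eqEsubset sub1set ?inE zg andbT.
- apply/subsetP => x xg.
  have [h hH [<- _]] := H_pair_trans _ _ _ _ zg xg y0_gamma y0_gamma.
  by rewrite inE Hz.
- apply/subsetP => y; rewrite !inE => yg.
  have [h hH [_ <-]] := H_pair_trans _ _ _ _ x0_gamma x0_gamma zg yg.
  by rewrite Hz.
Qed.

End PairTransitiveStabiliser.

Local Open Scope ring_scope.

Section Affine.

Variable F : fieldType.

Definition affine (a c x : F) := a * x + c.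

Lemma affine_inj a c : a != 0 -> injective (affine a c).
Proof. by move=> a0 x y /addIr /(mulfI a0). Qed.

Lemma affine_fixpoint a c : a != 1 -> affine a c (c / (1 - a)) = c / (1 - a).
Proof. by move=> a1; rewrite /affine; field; rewrite subr_eq0 eq_sym. Qed.

Lemma affine_fixpoint_uniq a c x y :
  a != 1 -> affine a c x = x -> affine a c y = y -> x = y.
Proof.
rewrite /affine => a1 fx fy; apply/eqP; rewrite -subr_eq0.
have : (a - 1) * (x - y) = (a * x + c - x) - (a * y + c - y) by ring.
by rewrite fx fy !subrr => /eqP; rewrite mulf_eq0 !subr_eq0 (negbTE a1).
Qed.

End Affine.

Arguments affine {F} a c x.
Arguments affine_inj {F a} c.
Arguments affine_fixpoint {F a} c.
Arguments affine_fixpoint_uniq {F a c x y}.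

Lemma finfield_mul_generator (F : finFieldType) :
  exists2 w : F, w != 0 & forall y, y != 0 -> exists n, y = w ^+ n.
Proof.
have /cyclicP[u Hu] := field_unit_group_cyclic [group of [set: {unit F}]].
exists (val u); first by rewrite -unitfE; exact: valP.
move=> y y0; have yu : y \is a GRing.unit by rewrite unitfE.
have : FinRing.unit F yu \in <[u]>%g by rewrite -Hu inE.
by case/cycleP => n Hn; exists n; rewrite -FinRing.val_unitX -Hn.
Qed.

Section TranslationFreeStabiliser.

Context {F : finFieldType} {L : {group {perm F}}} {gamma : {set F}}.
Hypothesis HL : forall g, g \in L -> in_GammaL g.

Local Notation G := (transl_set F * L)%g.
Local Notation H := ('N_G(gamma | 'P))%g.

Lemma mem_translL_semiaffine {g} : g \in G ->
  exists b (t : {rmorphism F -> F}) e, b != 0 /\ forall x, g x = b * t x + e.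
Proof.
move=> /mulsgP[_ l /imsetP[d _ ->] /HL[b [t [b0 [_ Ht]]]] ->].
exists b, t, (b * t d); split => // x.
by rewrite permM /transl permE Ht rmorphD mulrDr.
Qed.

Hypothesis M_trivial : (H :&: transl_set F = 1)%g.

Lemma mem_stab_perm {h} x : h \in H -> (h x \in gamma) = (x \in gamma).
Proof. by case/setIP => _ /(astabs_act x). Qed.

Lemma homo_transl_eq0 d : {homo +%R^~ d : x / x \in gamma} -> d = 0.
Proof.
have dN : transl d \in transl_set F by apply/imsetP; exists d.
move=> dg; have : transl d \in (H :&: transl_set F)%g.
  rewrite inE dN andbT inE; apply/andP; split.
    by rewrite -[transl d]mulg1 mem_mulg.
  apply/astabsP => y; rewrite /= apermE /transl permE.
  apply/idP/idP; last exact: dg.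
  by case/(inj_homo_onto (addIr d) dg) => x xg /addIr <-.
by rewrite M_trivial inE => /eqP/permP/(_ 0); rewrite /transl permE perm1 add0r.
Qed.

Lemma homo_shift_eq0 (f : F -> F) d : injective f ->
  {homo f : x / x \in gamma} -> {homo (fun x => f x + d) : x / x \in gamma} ->
  d = 0.
Proof.
move=> f_inj fg fdg; apply: homo_transl_eq0 => y.
by case/(inj_homo_onto f_inj fg) => x xg <-; exact: fdg.
Qed.

Lemma affine_stab_commute {a c a' c'} : a != 0 -> a' != 0 ->
  {homo affine a c : x / x \in gamma} -> {homo affine a' c' : x / x \in gamma} ->
  forall x, affine a c (affine a' c' x) = affine a' c' (affine a c x).
Proof.
move=> a0 a'0 fg f'g.
pose d := a' * c + c' - a * c' - c.
have shift x : affine a' c' (affine a c x) = affine a c (affine a' c' x) + d.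
  by rewrite /affine /d; ring.
have d0 : d = 0.
  apply: (homo_shift_eq0 _ _ (inj_comp (affine_inj c a0) (affine_inj c' a'0))).
    by move=> x /f'g /fg.
  by move=> x xg /=; rewrite -shift; apply/f'g/fg.
by move=> x; rewrite shift d0 addr0.
Qed.

Lemma affine_stab_fixpoint {a c} : a != 0 -> a != 1 ->
  {homo affine a c : x / x \in gamma} ->
  {in H, forall h : {perm F}, h (c / (1 - a)) = c / (1 - a)}.
Proof.
move=> a0 a1 fg h hH.
have /setIP[hG _] := hH; have [b [t [e [_ hE]]]] := mem_translL_semiaffine hG.
pose a' := t a; pose c' := b * t c + e - a' * e.
have a'0 : a' != 0 by rewrite fmorph_eq0.
have a'1 : a' != 1 by rewrite -(rmorph1 t) (inj_eq (fmorph_inj t)).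
have conj u : affine a' c' (h u) = h (affine a c u).
  by rewrite /affine !hE rmorphD rmorphM /c' /a'; ring.
have f'g : {homo affine a' c' : x / x \in gamma}.
  move=> y yg; rewrite -(permKV h y) conj mem_stab_perm // fg //.
  by rewrite -(mem_stab_perm _ hH) permKV.
have comm := affine_stab_commute a0 a'0 fg f'g.
set z := c / (1 - a); have fz : affine a c z = z := affine_fixpoint c a1.
have f'z : affine a' c' z = z.
  by have := affine_fixpoint_uniq a1 _ fz; apply; rewrite comm fz.
by have := affine_fixpoint_uniq a'1 _ f'z; apply; rewrite conj fz.
Qed.

Section NoAffineStabiliser.

Hypothesis no_affine_stab : forall a c, a != 0 -> a != 1 ->
  ~ {homo affine a c : x / x \in gamma}.

Lemma affine_stab_id {a c} : a != 0 ->
  {homo affine a c : x / x \in gamma} -> a = 1 /\ c = 0.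
Proof.
move=> a0 fg; have [a1 | /no_affine_stab/(_ fg)//] := eqVneq a 1.
split=> //; apply: (homo_shift_eq0 id) => // x.
by have := fg x; rewrite /affine a1 mul1r addrC.
Qed.

Lemma card_stab_le : (#|H| <= #|F|.-1)%N.
Proof.
have [w w0 wE] := finfield_mul_generator F.
pose Phi (g : {perm F}) := (g w - g 0) / (g 1 - g 0).
have PhiE (g : {perm F}) b (t : {rmorphism F -> F}) e :
    b != 0 -> (forall x, g x = b * t x + e) -> Phi g = t w.
  by move=> b0 gE; rewrite /Phi !gE rmorph0 rmorph1; field; rewrite addrK.
have semiaffine (g : {perm F}) : g \in H -> exists b (t : {rmorphism F -> F}) e,
    b != 0 /\ forall x, g x = b * t x + e.
  by case/setIP => /mem_translL_semiaffine.
rewrite -(cardsC1 (0 : F)) -(@card_in_imset _ _ Phi).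
  apply/subset_leq_card/subsetP => _ /imsetP[g /semiaffine[b [t [e [b0 gE]]]] ->].
  by rewrite !inE (PhiE _ _ _ _ b0 gE) fmorph_eq0.
move=> g1 g2 g1H g2H.
have [a [s [c [a0 g1E]]]] := semiaffine _ g1H.
have [a' [s' [c' [a'0 g2E]]]] := semiaffine _ g2H.
rewrite (PhiE _ _ _ _ a0 g1E) (PhiE _ _ _ _ a'0 g2E) => sw.
have ss' x : s x = s' x.
  have [-> | /wE[n ->]] := eqVneq x 0; first by rewrite !rmorph0.
  by rewrite !rmorphXn sw.
pose u := affine (a / a') (c - a / a' * c').
have uE v : u (g2 v) = g1 v by rewrite /u /affine g1E g2E ss'; field.
have ug : {homo u : x / x \in gamma}.
  move=> y yg; rewrite -(permKV g2 y) uE mem_stab_perm //.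
  by rewrite -(mem_stab_perm _ g2H) permKV.
have [aa' cc'] := affine_stab_id (mulf_neq0 a0 (invr_neq0 a'0)) ug.
have aE : a = a' by apply: (divIf a'0); rewrite aa' divff.
apply/permP => x; rewrite g1E g2E aE ss'; congr (_ + _).
by apply/eqP; rewrite -subr_eq0 -cc' aa' mul1r.
Qed.

End NoAffineStabiliser.

Hypothesis H_pair_trans : forall x x' y y', x \in gamma -> x' \in gamma ->
  y \notin gamma -> y' \notin gamma ->
  exists2 g, g \in H & g x = x' /\ g y = y'.
Context {x0 y0 : F}.
Hypotheses (x0_gamma : x0 \in gamma) (y0_gamma : y0 \notin gamma).

Lemma translation_free_pair_trans_card1 : #|gamma| = 1%N \/ #|~: gamma| = 1%N.
Proof.
pose affine_stab := [exists a : F, exists c : F,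
  [&& a != 0, a != 1 & [forall (x | x \in gamma), affine a c x \in gamma]]].
have [/existsP[a /existsP[c /and3P[a0 a1 /forall_inP fg]]] | /existsP no_affine] :=
  boolP affine_stab.
  exact: (pair_trans_fixpoint_card1 H_pair_trans x0_gamma y0_gamma _
            (affine_stab_fixpoint a0 a1 fg)).
have no_affine_stab a c : a != 0 -> a != 1 -> ~ {homo affine a c : x / x \in gamma}.
  move=> a0 a1 fg; apply: no_affine; exists a; apply/existsP; exists c.
  by rewrite a0 a1; apply/forall_inP.
apply: leq_mul_pred_add; first by apply/card_gt0P; exists x0.
  by apply/card_gt0P; exists y0; rewrite inE.
rewrite cardsC; apply: leq_trans (card_pair_trans_ge H_pair_trans x0_gamma y0_gamma) _.
exact: card_stab_le no_affine_stab.
Qed.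

End TranslationFreeStabiliser.

Lemma point_stab_transl_trivial {F : finFieldType} {L : {group {perm F}}}
    {gamma : {set F}} : #|gamma| = 1%N \/ #|~: gamma| = 1%N ->
  ('N_(transl_set F * L)(gamma | 'P) :&: transl_set F = 1)%g.
Proof.
move=> gz; have [z Nz] : exists z, ('N(gamma | 'P) = 'N([set z] | 'P))%g.
  case: gz => /eqP/cards1P[z gz]; exists z; first by rewrite gz.
  by rewrite -astabsC gz.
have transl0 : transl (0 : F) = 1%g.
  by apply/permP => x; rewrite /transl permE addr0 perm1.
have one_N : 1%g \in transl_set F by rewrite -transl0; apply/imsetP; exists 0.
have one_G : 1%g \in (transl_set F * L)%g by rewrite -[1%g]mulg1 mem_mulg.
apply/eqP; rewrite eqEsubset sub1set in_setI one_N andbT in_setI one_G group1 !andbT.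
apply/subsetP => _ /setIP[/setIP[_]] /[swap] /imsetP[b _ ->].
rewrite Nz astabs_set1 => /astab1P; rewrite /= apermE /transl permE.
by rewrite -{2}(addr0 z) => /addrI ->; rewrite -/(transl 0) transl0 inE.
Qed.

Lemma card_setC_eq1 (T : finType) (A : {set T}) :
  (0 < #|T|)%N -> (#|A| == #|T| - 1)%N = (#|~: A| == 1%N).
Proof.
move=> T_gt0; have cardA := cardsC A.
by apply/idP/idP => /eqP ?; apply/eqP; lia.
Qed.

Local Close Scope ring_scope.

Theorem lemma6p2 (F : finFieldType) (L : {group {perm F}})
  (gamma : {set F})
  (HL : forall g, g \in L -> in_GammaL g)
  (Ltrans : forall x y : F, x != 0%R -> y != 0%R ->
     exists2 g, g \in L & g x = y)
  (Hk1 : 1 <= #|gamma|) (Hk2 : #|gamma| <= #|F| - 1)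
  (Htrans : forall x x' y y' : F, x \in gamma -> x' \in gamma ->
     y \notin gamma -> y' \notin gamma ->
     exists2 g, g \in ('N_(transl_set F * L)(gamma | 'P))%g
                & g x = x' /\ g y = y') :
  (#|gamma| == 1) || (#|gamma| == #|F| - 1) <->
  ('N_(transl_set F * L)(gamma | 'P) :&: transl_set F = 1)%g.
Proof.
have [x0 x0g] : exists x0, x0 \in gamma by apply/set0Pn; rewrite -card_gt0.
have cardF : #|gamma| + #|~: gamma| = #|F| := cardsC gamma.
have /set0Pn[y0] : ~: gamma != set0 by rewrite -card_gt0; lia.
rewrite inE => y0g.
rewrite card_setC_eq1; last by apply/card_gt0P; exists 0%R.
have -> : (#|gamma| == 1) || (#|~: gamma| == 1) <-> #|gamma| = 1 \/ #|~: gamma| = 1.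
  by split=> [/orP[]/eqP | [] ->]; [left | right | rewrite ?orbT..].
split=> [|M1]; first exact: point_stab_transl_trivial.
exact: (translation_free_pair_trans_card1 HL M1 Htrans x0g y0g).
Qed.
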